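(* For every integer $\ell\ge1$, the Wu function $\varphi_{\ell,\ell}$ satisfies, for $0\le r\le2$, $$\varphi_{\ell,\ell}(r)=2^{\ell+1}\Gamma(\ell+1)\left[\frac{1^{(\ell)}}{(3/2)^{(\ell)}}-\frac r2\,{}_2F_1\!\left(-\ell,\tfrac12;\tfrac32;\tfrac{r^2}{4}\right)\right].$$
   Context: $f_\ell(r)=(1-r^2)_+^\ell$, $f_\ell*f_\ell(r)=\int_{\mathbb{R}}f_\ell(|y|)f_\ell(|r-y|)dy$ for $r\ge0$; $\mathscr{D}\varphi(r)=-\frac1r\varphi'(r)$; the Wu function is $\varphi_{\ell,k}(r)=\mathscr{D}^k(f_\ell*f_\ell)(r)$ ($k$-fold iterate). Pochhammer symbol: $a^{(0)}=1$, $a^{(n)}=a(a+1)\cdots(a+n-1)$. Hypergeometric function: ${}_2F_1(a,b;c;z)=\sum_{n\ge0}\frac{a^{(n)}b^{(n)}}{c^{(n)}}\frac{z^n}{n!}$. *)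

From Stdlib Require Import Reals.
From Coquelicot Require Import Coquelicot.
Open Scope R_scope.

Definition f_trunc (l : nat) (r : R) : R := (Rmax (1 - r ^ 2) 0) ^ l.

Definition conv_ff (l : nat) (r : R) : R :=
  RInt_gen (fun y => f_trunc l (Rabs y) * f_trunc l (Rabs (r - y)))
           (Rbar_locally m_infty) (Rbar_locally p_infty).

Definition Dop (phi : R -> R) (r : R) : R :=
  if Req_EM_T r 0 then real (Lim (fun s => - Derive phi s / s) 0)
  else - Derive phi r / r.

Definition wu (l k : nat) : R -> R := Nat.iter k Dop (conv_ff l).

Fixpoint poch (a : R) (n : nat) : R :=
  match n with
  | O => 1
  | S m => poch a m * (a + INR m)
  end.

Definition hyp2F1 (a b c z : R) : R :=
  Series (fun n => poch a n * poch b n / poch c n * z ^ n / INR (Factorial.fact n)).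

(* On [-1, 1] the integrand of f_l * f_l (r) is, for 0 <= r <= 2, the polynomial
   ((1 - y^2) (1 - (r - y)^2))^l on [r - 1, 1] and 0 elsewhere, and a quadratic change of
   variables turns it into the closed form (f_l * f_l)(r) = 2 4^l K_{l,l}(|r|) for |r| <= 2
   (0 beyond), where K_{l,m}(a) = int_{a/2}^1 (x^2 - a^2/4)^m (1 - x^2)^l dx.
   Differentiating under the integral sign (the moving lower limit contributes nothing when
   m > 0) gives D (c K_{l,m+1}) = c (m+1)/2 K_{l,m}, so l applications of D leave
   2^(l+1) l! K_{l,0}(r).  Finally K_{l,0}(r) = int_0^1 (1 - x^2)^l - int_0^{r/2} (1 - x^2)^l:
   the first integral follows from a Wallis-type recursion, the second from integrating the
   binomial expansion term by term, which is the terminating series 2F1(-l, 1/2; 3/2; r^2/4). *)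

From Stdlib Require Import Reals Lra Lia Psatz FunctionalExtensionality.
From Coquelicot Require Import Coquelicot.
Open Scope R_scope.

Lemma continuous_of_ex_derive (f : R -> R) x : ex_derive f x -> continuous f x.
Proof. apply (ex_derive_continuous (K := R_AbsRing) (V := R_NormedModule)). Qed.

Lemma ex_RInt_of_ex_derive (f : R -> R) a b :
  (forall x, ex_derive f x) -> ex_RInt f a b.
Proof.
  intros Hf. apply (ex_RInt_continuous (V := R_CompleteNormedModule)).
  intros x _. apply continuous_of_ex_derive, Hf.
Qed.

Lemma is_RInt_null (f : R -> R) a b :
  (forall x, Rmin a b < x < Rmax a b -> f x = 0) -> is_RInt f a b 0.
Proof.
  intros Hf. apply (is_RInt_ext (fun _ => 0)).
  - intros x Hx. symmetry. apply Hf, Hx.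
  - pose proof (is_RInt_const a b 0) as H.
    change (scal (b - a) 0) with ((b - a) * 0) in H. rewrite Rmult_0_r in H. exact H.
Qed.

Lemma is_RInt_comp_Ropp (f : R -> R) a b I :
  is_RInt f a b I -> is_RInt (fun y => f (- y)) (- b) (- a) I.
Proof.
  intros H.
  rewrite <- (Ropp_involutive a), <- (Ropp_involutive b) in H.
  apply is_RInt_comp_opp, is_RInt_swap, is_RInt_opp in H.
  rewrite opp_opp in H.
  apply (is_RInt_ext _ _ _ _ _ (fun x _ => opp_opp (f (- x))) H).
Qed.

Lemma RInt_gen_of_support (F : R -> R) a b I :
  (forall y, y <= a \/ b <= y -> F y = 0) -> is_RInt F a b I ->
  RInt_gen F (Rbar_locally m_infty) (Rbar_locally p_infty) = I.
Proof.
  intros HF HI. apply is_RInt_gen_unique. intros P HP.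
  apply (Filter_prod _ _ _ (fun u => u < a) (fun v => b < v)).
  - exists a. auto.
  - exists b. auto.
  - intros u v Hu Hv. exists I. split; [|exact (locally_singleton _ _ HP)].
    assert (Hl : is_RInt F u a 0).
    { apply is_RInt_null. intros x Hx. apply HF. left.
      rewrite Rmax_right in Hx by lra. lra. }
    assert (Hr : is_RInt F b v 0).
    { apply is_RInt_null. intros x Hx. apply HF. right.
      rewrite Rmin_left in Hx by lra. lra. }
    pose proof (is_RInt_Chasles _ _ _ _ _ _ (is_RInt_Chasles _ _ _ _ _ _ Hl HI) Hr) as H.
    change (plus (plus 0 I) 0) with (0 + I + 0) in H.
    rewrite Rplus_0_l, Rplus_0_r in H. exact H.
Qed.

Lemma poch_pos a n : 0 < a -> 0 < poch a n.
Proof.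
  intros Ha. induction n as [|n IH]; simpl; [lra|].
  pose proof (pos_INR n). apply Rmult_lt_0_compat; lra.
Qed.

Lemma poch_shift a k : a * poch (a + 1) k = poch a k * (a + INR k).
Proof.
  induction k as [|k IH]; cbn [poch]; [simpl; ring|].
  rewrite <- Rmult_assoc, IH. rewrite S_INR. ring.
Qed.

Lemma poch_opp_nat_gt n k : (n < k)%nat -> poch (- INR n) k = 0.
Proof.
  induction k as [|k IH]; intros Hk; [lia|]. simpl.
  destruct (Nat.eq_dec n k) as [->|Hne]; [ring|].
  rewrite IH by lia. ring.
Qed.

Lemma poch_opp_nat_le n k : (k <= n)%nat ->
  poch (- INR n) k = (-1) ^ k * INR (Factorial.fact n) / INR (Factorial.fact (n - k)).
Proof.
  induction k as [|k IH]; intros Hk.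
  - simpl. rewrite Nat.sub_0_r. field. apply INR_fact_neq_0.
  - simpl poch. rewrite IH by lia.
    replace (n - k)%nat with (S (n - S k)) by lia.
    rewrite fact_simpl, mult_INR, S_INR, minus_INR, S_INR by lia.
    assert (INR k < INR n) by (apply lt_INR; lia).
    pose proof (INR_fact_neq_0 (n - S k)).
    simpl pow. field. lra.
Qed.

Definition hyp2F1_term (a b c z : R) (k : nat) : R :=
  poch a k * poch b k / poch c k * z ^ k / INR (Factorial.fact k).

Lemma is_series_finite_support (u : nat -> R) n :
  (forall k, (n < k)%nat -> u k = 0) -> is_series u (sum_n u n).
Proof.
  intros Hu. apply (filterlim_ext_loc (fun _ => sum_n u n)); [|apply filterlim_const].
  exists n. intros N HN. induction N as [|N IH].
  - now replace n with 0%nat by lia.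
  - destruct (Nat.eq_dec n (S N)) as [->|Hne]; [reflexivity|].
    rewrite sum_Sn, <- IH, Hu by lia.
    change (sum_n u n = sum_n u n + 0). now rewrite Rplus_0_r.
Qed.

Lemma hyp2F1_terminating n b c z :
  hyp2F1 (- INR n) b c z = sum_n (hyp2F1_term (- INR n) b c z) n.
Proof.
  apply is_series_unique, is_series_finite_support. intros k Hk.
  unfold hyp2F1_term. rewrite poch_opp_nat_gt by exact Hk. unfold Rdiv. ring.
Qed.

Lemma hyp2F1_term_half n z k : (k <= n)%nat ->
  (2 * INR k + 1) * hyp2F1_term (- INR n) (1 / 2) (3 / 2) z k
  = Binomial.C n k * (-1) ^ k * z ^ k.
Proof.
  intros Hk. unfold hyp2F1_term, Binomial.C. rewrite poch_opp_nat_le by exact Hk.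
  assert (H32 : poch (3 / 2) k = poch (1 / 2) k * (2 * INR k + 1)).
  { apply (Rmult_eq_reg_l (1 / 2)); [|lra].
    replace (3 / 2) with (1 / 2 + 1) by field. rewrite poch_shift. field. }
  rewrite H32.
  pose proof (poch_pos (1 / 2) k ltac:(lra)). pose proof (pos_INR k).
  pose proof (INR_fact_neq_0 k). pose proof (INR_fact_neq_0 (n - k)).
  field. repeat split; lra.
Qed.

Lemma one_minus_sq_pow_expansion n x :
  (1 - x ^ 2) ^ n
  = sum_n (fun k => (2 * INR k + 1) * hyp2F1_term (- INR n) (1 / 2) (3 / 2) 1 k
                   * x ^ (2 * k)) n.
Proof.
  replace (1 - x ^ 2) with (- x ^ 2 + 1) by ring.
  rewrite binomial, sum_n_Reals. apply sum_eq. intros k Hk.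
  rewrite hyp2F1_term_half by exact Hk.
  rewrite !pow1, pow_mult. replace (- x ^ 2) with (-1 * x ^ 2) by ring.
  rewrite Rpow_mult_distr. ring.
Qed.

Lemma RInt_one_minus_sq_pow n a :
  RInt (fun x => (1 - x ^ 2) ^ n) 0 a = a * hyp2F1 (- INR n) (1 / 2) (3 / 2) (a ^ 2).
Proof.
  set (t := hyp2F1_term (- INR n) (1 / 2) (3 / 2) 1).
  set (F := fun y => sum_n (fun k => t k * y ^ (2 * k + 1)) n).
  assert (HF : forall y, F y = y * hyp2F1 (- INR n) (1 / 2) (3 / 2) (y ^ 2)).
  { intros y. rewrite hyp2F1_terminating. unfold F.
    rewrite <- (sum_n_mult_l (K := R_Ring)). apply sum_n_ext. intros k.
    unfold t, hyp2F1_term. rewrite <- pow_mult, pow1, Nat.add_1_r.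
    change (mult y ?z) with (y * z). rewrite <- tech_pow_Rmult. simpl.
    pose proof (poch_pos (3 / 2) k ltac:(lra)). pose proof (INR_fact_neq_0 k).
    field. lra. }
  assert (HD : forall x, is_derive F x ((1 - x ^ 2) ^ n)).
  { intros x. rewrite one_minus_sq_pow_expansion.
    apply (is_derive_sum_n (fun k y => t k * y ^ (2 * k + 1))). intros k _.
    auto_derive; [auto|]. unfold t.
    replace (pred (k + (k + 0) + 1)) with (2 * k)%nat by lia.
    replace (INR (k + (k + 0) + 1)) with (2 * INR k + 1) by (rewrite !plus_INR; simpl; ring).
    ring. }
  assert (Hc : forall x, continuous (fun x => (1 - x ^ 2) ^ n) x).
  { intros x. apply continuous_of_ex_derive. auto_derive. auto. }
  pose proof (is_RInt_derive (V := R_CompleteNormedModule) F _ 0 a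
                (fun x _ => HD x) (fun x _ => Hc x)) as H.
  rewrite (is_RInt_unique _ _ _ _ H), !HF. change (minus ?u ?v) with (u - v). simpl. ring.
Qed.

Lemma RInt_one_minus_sq_pow_succ n :
  (2 * INR n + 3) * RInt (fun x => (1 - x ^ 2) ^ S n) 0 1
  = 2 * (INR n + 1) * RInt (fun x => (1 - x ^ 2) ^ n) 0 1.
Proof.
  set (dPhi := fun x =>
         (2 * INR n + 3) * (1 - x ^ 2) ^ S n - 2 * (INR n + 1) * (1 - x ^ 2) ^ n).
  assert (HD : forall x, is_derive (fun x => x * (1 - x ^ 2) ^ S n) x (dPhi x)).
  { intros x. unfold dPhi. auto_derive; [auto|].
    change (match n with 0%nat => 1 | S _ => INR n + 1 end) with (INR (S n)). rewrite S_INR.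
    replace (1 + - (x * (x * 1))) with (1 - x ^ 2) by ring. simpl pow. ring. }
  assert (Hcont : forall x, continuous dPhi x).
  { intros x. apply continuous_of_ex_derive. unfold dPhi. auto_derive. auto. }
  assert (Hint : forall k, ex_RInt (fun x => (1 - x ^ 2) ^ k) 0 1).
  { intros k. apply ex_RInt_of_ex_derive. intros x. auto_derive. auto. }
  pose proof (is_RInt_derive (V := R_CompleteNormedModule) _ dPhi 0 1
                (fun x _ => HD x) (fun x _ => Hcont x)) as Hftc.
  assert (Hlin : is_RInt dPhi 0 1
                   (minus (scal (2 * INR n + 3) (RInt (fun x => (1 - x ^ 2) ^ S n) 0 1))
                          (scal (2 * (INR n + 1)) (RInt (fun x => (1 - x ^ 2) ^ n) 0 1)))).
  { exact (is_RInt_minus _ _ _ _ _ _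
             (is_RInt_scal _ _ _ _ _ (RInt_correct _ _ _ (Hint (S n))))
             (is_RInt_scal _ _ _ _ _ (RInt_correct _ _ _ (Hint n)))). }
  pose proof (is_RInt_unique _ _ _ _ Hftc) as E1.
  rewrite (is_RInt_unique _ _ _ _ Hlin) in E1.
  change (scal ?a ?b) with (a * b) in E1. change (minus ?a ?b) with (a - b) in E1.
  cbv beta in E1. replace (1 - 1 ^ 2) with 0 in E1 by ring.
  rewrite pow_i, Rmult_0_l, Rmult_0_r in E1 by lia. lra.
Qed.

Lemma RInt_one_minus_sq_pow_01 n :
  RInt (fun x => (1 - x ^ 2) ^ n) 0 1 = poch 1 n / poch (3 / 2) n.
Proof.
  induction n as [|n IH].
  - simpl. rewrite RInt_const. change (scal ?a ?b) with (a * b). field.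
  - pose proof (RInt_one_minus_sq_pow_succ n) as H. rewrite IH in H.
    pose proof (poch_pos 1 n ltac:(lra)). pose proof (poch_pos (3 / 2) n ltac:(lra)).
    pose proof (pos_INR n).
    apply (Rmult_eq_reg_l (2 * INR n + 3)); [|lra].
    rewrite H. cbn [poch]. field. lra.
Qed.

Lemma f_trunc_Rabs l y : f_trunc l (Rabs y) = f_trunc l y.
Proof. unfold f_trunc. now rewrite pow2_abs. Qed.

Lemma f_trunc_outside l y : (1 <= l)%nat -> 1 <= Rabs y -> f_trunc l y = 0.
Proof.
  intros hl hy. unfold f_trunc. rewrite Rmax_right.
  - apply pow_i. lia.
  - rewrite <- pow2_abs. nra.
Qed.

Lemma f_trunc_inside l y : Rabs y <= 1 -> f_trunc l y = (1 - y ^ 2) ^ l.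
Proof.
  intros hy. unfold f_trunc. rewrite Rmax_left; [reflexivity|].
  rewrite <- pow2_abs. pose proof (Rabs_pos y). nra.
Qed.

Section ProductSubstitution.

Variable s : R.
Hypothesis Hs : 0 <= s <= 1.

Definition quad_branch_disc (y : R) : R := 2 * (1 + s ^ 2) - (y - s) ^ 2.
Definition quad_branch (e y : R) : R := (sqrt (quad_branch_disc y) + e * (y - s)) / 2.
Definition quad_branch_deriv (e y : R) : R :=
  (- (y - s) / sqrt (quad_branch_disc y) + e) / 2.

Lemma quad_branch_disc_ge1 y : 2 * s - 1 <= y <= 1 -> 1 <= quad_branch_disc y.
Proof. intros Hy. unfold quad_branch_disc. nra. Qed.

Lemma quad_branch_root e y : e * e = 1 -> 0 <= quad_branch_disc y ->
  4 * ((quad_branch e y ^ 2 - s ^ 2) * (1 - quad_branch e y ^ 2))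
  = (1 - y ^ 2) * (1 - (2 * s - y) ^ 2).
Proof.
  intros He Hd. unfold quad_branch.
  assert (Hsq := sqrt_sqrt _ Hd). set (q := sqrt (quad_branch_disc y)) in *.
  assert (Hx2 : ((q + e * (y - s)) / 2) ^ 2 = (1 + s ^ 2 + e * q * (y - s)) / 2).
  { replace (((q + e * (y - s)) / 2) ^ 2)
      with ((q * q + 2 * e * q * (y - s) + (e * e) * (y - s) ^ 2) / 4) by field.
    rewrite Hsq, He. unfold quad_branch_disc. field. }
  rewrite Hx2.
  replace (4 * (((1 + s ^ 2 + e * q * (y - s)) / 2 - s ^ 2)
                * (1 - (1 + s ^ 2 + e * q * (y - s)) / 2)))
    with ((1 - s ^ 2) ^ 2 - (e * e) * (q * q) * (y - s) ^ 2) by field.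
  rewrite Hsq, He. unfold quad_branch_disc. ring.
Qed.

Lemma quad_branch_endpoints :
  quad_branch 1 (2 * s - 1) = s /\ quad_branch 1 1 = 1 /\
  quad_branch (-1) (2 * s - 1) = 1 /\ quad_branch (-1) 1 = s.
Proof.
  assert (Hend : forall y, (y - s) ^ 2 = (1 - s) ^ 2 -> sqrt (quad_branch_disc y) = 1 + s).
  { intros y Hy. unfold quad_branch_disc. rewrite Hy.
    replace (2 * (1 + s ^ 2) - (1 - s) ^ 2) with ((1 + s) ^ 2) by ring.
    apply sqrt_pow2. lra. }
  unfold quad_branch. rewrite !Hend by ring. repeat split; field.
Qed.

Lemma is_RInt_quad_branch (h : R -> R) e : (forall x, continuous h x) ->
  is_RInt (fun y => quad_branch_deriv e y * h (quad_branch e y)) (2 * s - 1) 1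
          (RInt h (quad_branch e (2 * s - 1)) (quad_branch e 1)).
Proof.
  intros Hh.
  apply (is_RInt_comp (V := R_CompleteNormedModule) h (quad_branch e)); [intros; apply Hh|].
  intros y Hy. rewrite Rmin_left, Rmax_right in Hy by lra.
  pose proof (quad_branch_disc_ge1 y Hy) as Hd.
  unfold quad_branch, quad_branch_deriv, quad_branch_disc in *. split.
  - auto_derive; [lra|].
    replace (2 * (1 + s * (s * 1)) + - ((y + - s) * ((y + - s) * 1)))
      with (2 * (1 + s ^ 2) - (y - s) ^ 2) by ring.
    field. apply Rgt_not_eq, sqrt_lt_R0. lra.
  - apply continuous_of_ex_derive. auto_derive.
    repeat split; [lra|apply Rgt_not_eq, sqrt_lt_R0; lra].
Qed.

(* Both roots [quad_branch (+-1)] of 4 (x^2 - s^2) (1 - x^2) = (1 - y^2) (1 - (2 s - y)^2)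
   map [2 s - 1, 1] onto [s, 1], in opposite directions, and their derivatives differ by
   exactly 1: subtracting the two changes of variables sidesteps the square-root singularity
   of each. *)
Lemma RInt_product_substitution (g : R -> R) :
  (forall u, continuous g u) ->
  RInt (fun y => g ((1 - y ^ 2) * (1 - (2 * s - y) ^ 2))) (2 * s - 1) 1
  = 2 * RInt (fun x => g (4 * ((x ^ 2 - s ^ 2) * (1 - x ^ 2)))) s 1.
Proof.
  intros Hg.
  set (h := fun x => g (4 * ((x ^ 2 - s ^ 2) * (1 - x ^ 2)))).
  assert (Hh : forall x, continuous h x).
  { intros x. apply (continuous_comp (fun x => 4 * ((x ^ 2 - s ^ 2) * (1 - x ^ 2))) g).
    - apply continuous_of_ex_derive. auto_derive. auto.
    - apply Hg. }
  pose proof (is_RInt_quad_branch h 1 Hh) as Hplus.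
  pose proof (is_RInt_quad_branch h (-1) Hh) as Hminus.
  destruct quad_branch_endpoints as (E1 & E2 & E3 & E4).
  rewrite E1, E2 in Hplus. rewrite E3, E4 in Hminus.
  apply is_RInt_unique.
  replace (2 * RInt h s 1) with (minus (RInt h s 1) (RInt h 1 s)).
  2:{ rewrite <- (opp_RInt_swap h s 1) by (apply ex_RInt_continuous; intros; apply Hh).
      change (RInt h s 1 - - RInt h s 1 = 2 * RInt h s 1). ring. }
  eapply is_RInt_ext; [|exact (is_RInt_minus _ _ _ _ _ _ Hplus Hminus)].
  intros y Hy. rewrite Rmin_left, Rmax_right in Hy by lra.
  pose proof (quad_branch_disc_ge1 y ltac:(lra)) as Hd.
  change (quad_branch_deriv 1 y * h (quad_branch 1 y)
          - quad_branch_deriv (-1) y * h (quad_branch (-1) y)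
          = g ((1 - y ^ 2) * (1 - (2 * s - y) ^ 2))).
  unfold h. rewrite !quad_branch_root by lra.
  unfold quad_branch_deriv. field. apply Rgt_not_eq, sqrt_lt_R0. lra.
Qed.

End ProductSubstitution.

Definition kernel_int (l m : nat) (a : R) : R :=
  RInt (fun x => (x ^ 2 - (a / 2) ^ 2) ^ m * (1 - x ^ 2) ^ l) (a / 2) 1.

Definition wu_profile (l m : nat) (c r : R) : R :=
  if Rle_dec (Rabs r) 2 then c * kernel_int l m (Rabs r) else 0.

Lemma RInt_conv_polynomial_part l a : 0 <= a <= 2 ->
  RInt (fun y => ((1 - y ^ 2) * (1 - (a - y) ^ 2)) ^ l) (a - 1) 1
  = 2 * 4 ^ l * kernel_int l l a.
Proof.
  intros ha.
  assert (Hpow : forall u, continuous (fun u => u ^ l) u).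
  { intros u. apply continuous_of_ex_derive. auto_derive. auto. }
  pose proof (RInt_product_substitution (a / 2) ltac:(lra) _ Hpow) as H.
  replace (2 * (a / 2)) with a in H by field. rewrite H.
  unfold kernel_int. rewrite Rmult_assoc. f_equal.
  rewrite <- (RInt_scal (V := R_CompleteNormedModule)).
  - apply RInt_ext. intros x _. rewrite !Rpow_mult_distr. reflexivity.
  - apply ex_RInt_of_ex_derive. intros. auto_derive. auto.
Qed.

Lemma is_RInt_conv_integrand_nonneg l a : (1 <= l)%nat -> 0 <= a <= 2 ->
  is_RInt (fun y => f_trunc l (Rabs y) * f_trunc l (Rabs (a - y))) (-1) 1
          (2 * 4 ^ l * kernel_int l l a).
Proof.
  intros hl ha.
  set (P := fun y => ((1 - y ^ 2) * (1 - (a - y) ^ 2)) ^ l).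
  assert (Hleft : is_RInt (fun y => f_trunc l (Rabs y) * f_trunc l (Rabs (a - y)))
                          (-1) (a - 1) 0).
  { apply is_RInt_null. intros y Hy. rewrite Rmin_left, Rmax_right in Hy by lra.
    rewrite (f_trunc_Rabs l (a - y)), (f_trunc_outside l (a - y))
      by (auto; rewrite Rabs_right; lra).
    ring. }
  assert (Hright : is_RInt (fun y => f_trunc l (Rabs y) * f_trunc l (Rabs (a - y))) (a - 1) 1
                           (RInt P (a - 1) 1)).
  { apply (is_RInt_ext P).
    - intros y Hy. rewrite Rmin_left, Rmax_right in Hy by lra.
      unfold P. rewrite !f_trunc_Rabs, !f_trunc_inside by (apply Rabs_le; lra).
      apply Rpow_mult_distr.
    - apply (RInt_correct (V := R_CompleteNormedModule)).
      apply ex_RInt_of_ex_derive. intros. unfold P. auto_derive. auto. }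
  pose proof (is_RInt_Chasles _ _ _ _ _ _ Hleft Hright) as H.
  unfold P in H. rewrite RInt_conv_polynomial_part in H by exact ha.
  change (plus 0 ?x) with (0 + x) in H. rewrite Rplus_0_l in H. exact H.
Qed.

Lemma is_RInt_conv_integrand l r : (1 <= l)%nat ->
  is_RInt (fun y => f_trunc l (Rabs y) * f_trunc l (Rabs (r - y))) (-1) 1
          (wu_profile l l (2 * 4 ^ l) r).
Proof.
  intros hl. unfold wu_profile. destruct (Rle_dec (Rabs r) 2) as [Hr|Hr].
  - destruct (Rle_dec 0 r) as [Hp|Hn].
    + rewrite Rabs_right in * by lra. apply is_RInt_conv_integrand_nonneg; auto; lra.
    + rewrite Rabs_left in * by lra.
      pose proof (is_RInt_comp_Ropp _ _ _ _
                    (is_RInt_conv_integrand_nonneg l (- r) hl ltac:(lra))) as H.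
      replace (- -1) with 1 in H by ring.
      eapply is_RInt_ext; [|exact H]. intros y _. cbv beta.
      replace (- r - - y) with (- (r - y)) by ring. rewrite !Rabs_Ropp. reflexivity.
  - apply is_RInt_null. intros y Hy. rewrite Rmin_left, Rmax_right in Hy by lra.
    assert (Rabs r <= Rabs (r - y) + Rabs y).
    { replace r with ((r - y) + y) at 1 by ring. apply Rabs_triang. }
    assert (Rabs y < 1) by (apply Rabs_def1; lra).
    rewrite (f_trunc_Rabs l (r - y)), (f_trunc_outside l (r - y)) by (auto; lra). ring.
Qed.

Lemma conv_ff_profile l : (1 <= l)%nat -> conv_ff l = wu_profile l l (2 * 4 ^ l).
Proof.
  intros hl. apply functional_extensionality. intros r.
  apply (RInt_gen_of_support _ (-1) 1); [|apply is_RInt_conv_integrand, hl].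
  intros y Hy. rewrite f_trunc_Rabs, (f_trunc_outside l y); [ring|exact hl|].
  destruct Hy; [rewrite Rabs_left | rewrite Rabs_right]; lra.
Qed.

Lemma continuity_2d_pt_pow (f : R -> R -> R) n x y :
  continuity_2d_pt f x y -> continuity_2d_pt (fun u v => f u v ^ n) x y.
Proof.
  intros Hf. induction n as [|n IH]; simpl.
  - apply continuity_2d_pt_const.
  - apply continuity_2d_pt_mult; assumption.
Qed.

Section KernelDerivative.

Variables l m : nat.

Let kernel_integrand (a x : R) : R := (x ^ 2 - (a / 2) ^ 2) ^ m * (1 - x ^ 2) ^ l.
Let dkernel_integrand (a x : R) : R :=
  INR m * (x ^ 2 - (a / 2) ^ 2) ^ pred m * (- (a / 2)) * (1 - x ^ 2) ^ l.

Lemma is_derive_kernel_integrand a x :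
  is_derive (fun a => kernel_integrand a x) a (dkernel_integrand a x).
Proof.
  unfold kernel_integrand, dkernel_integrand. auto_derive; [auto|].
  replace (x * (x * 1) + - (a * / 2 * (a * / 2 * 1))) with (x ^ 2 - (a / 2) ^ 2) by field.
  replace (1 - x * (x * 1)) with (1 - x ^ 2) by ring. field.
Qed.

Lemma continuity_2d_pt_dkernel_integrand a x :
  continuity_2d_pt (fun u v => Derive (fun z => kernel_integrand z v) u) a x.
Proof.
  apply (continuity_2d_pt_ext (fun u v => dkernel_integrand u v)).
  { intros u v. symmetry. apply is_derive_unique, is_derive_kernel_integrand. }
  unfold dkernel_integrand.
  repeat first
    [ apply continuity_2d_pt_mult | apply continuity_2d_pt_minus | apply continuity_2d_pt_opp
    | apply continuity_2d_pt_pow | apply continuity_2d_pt_id1 | apply continuity_2d_pt_id2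
    | apply continuity_2d_pt_const ].
Qed.

Lemma is_derive_kernel_int a :
  is_derive (kernel_int l m) a
    (RInt (dkernel_integrand a) (a / 2) 1 + - kernel_integrand a (a / 2) * (1 / 2)).
Proof.
  assert (Hint : forall y b c, ex_RInt (kernel_integrand y) b c).
  { intros y b c. apply ex_RInt_of_ex_derive. intros x.
    unfold kernel_integrand. auto_derive. auto. }
  assert (Hda : RInt (dkernel_integrand a) (a / 2) 1
                = RInt (fun x => Derive (fun z => kernel_integrand z x) a) (a / 2) 1).
  { apply RInt_ext. intros x _. symmetry. apply is_derive_unique, is_derive_kernel_integrand. }
  rewrite Hda.
  apply (is_derive_RInt_param_bound_comp_aux2 kernel_integrand (fun x => x / 2)).
  - apply filter_forall. intros y. apply Hint.
  - exists (mkposreal 1 Rlt_0_1). apply filter_forall. intros y. apply Hint.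
  - auto_derive; [auto|field].
  - exists (mkposreal 1 Rlt_0_1). apply filter_forall. intros y x _.
    eexists. apply is_derive_kernel_integrand.
  - intros x _. apply continuity_2d_pt_dkernel_integrand.
  - exists (mkposreal 1 Rlt_0_1). intros u v _ _. apply continuity_2d_pt_dkernel_integrand.
  - apply continuity_pt_filterlim, continuous_of_ex_derive.
    unfold kernel_integrand. auto_derive. auto.
Qed.

Lemma ex_derive_kernel_int a : ex_derive (kernel_int l m) a.
Proof. eexists. apply is_derive_kernel_int. Qed.

End KernelDerivative.

Lemma is_derive_kernel_int_succ l m a :
  is_derive (kernel_int l (S m)) a (- (a / 2) * INR (S m) * kernel_int l m a).
Proof.
  assert (E : RInt (fun x => INR (S m) * (x ^ 2 - (a / 2) ^ 2) ^ m * - (a / 2) * (1 - x ^ 2) ^ l)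
                   (a / 2) 1
              + - (((a / 2) ^ 2 - (a / 2) ^ 2) ^ S m * (1 - (a / 2) ^ 2) ^ l) * (1 / 2)
              = - (a / 2) * INR (S m) * kernel_int l m a).
  { rewrite Rminus_diag, pow_i, Rmult_0_l, Ropp_0, Rmult_0_l, Rplus_0_r by lia.
    unfold kernel_int.
    rewrite <- (RInt_scal (V := R_CompleteNormedModule))
      by (apply ex_RInt_of_ex_derive; intros; auto_derive; auto).
    apply RInt_ext. intros x _. change (scal ?c ?y) with (c * y). simpl. ring. }
  rewrite <- E. apply is_derive_kernel_int.
Qed.

Lemma kernel_int_2 l m : kernel_int l m 2 = 0.
Proof.
  unfold kernel_int. replace (2 / 2) with 1 by field.
  apply (RInt_point (V := R_CompleteNormedModule)).
Qed.

Lemma wu_profile_Ropp l m c r : wu_profile l m c (- r) = wu_profile l m c r.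
Proof. unfold wu_profile. now rewrite Rabs_Ropp. Qed.

Lemma continuous_wu_profile_0 l m c : continuous (wu_profile l m c) 0.
Proof.
  apply (continuous_ext_loc _ (fun x => c * kernel_int l m (Rabs x))).
  - apply (locally_interval _ 0 (-2) 2); [simpl; lra|simpl; lra|].
    intros y Hlo Hhi. simpl in Hlo, Hhi. unfold wu_profile.
    destruct (Rle_dec (Rabs y) 2) as [_|H]; [reflexivity|].
    exfalso. apply H, Rabs_le. lra.
  - apply (continuous_comp Rabs (fun z => c * kernel_int l m z)); [apply continuous_Rabs|].
    apply continuous_of_ex_derive, ex_derive_scal, ex_derive_kernel_int.
Qed.

Lemma is_derive_wu_profile_pos l m c r : 0 < r ->
  is_derive (wu_profile l (S m) c) r (- r * wu_profile l m (c * INR (S m) / 2) r).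
Proof.
  intros Hr.
  set (h := fun x => c * kernel_int l (S m) x).
  assert (Hh : forall x, is_derive h x (c * (- (x / 2) * INR (S m) * kernel_int l m x))).
  { intros x. apply is_derive_scal, is_derive_kernel_int_succ. }
  apply (is_derive_ext_loc (extension_cont h (fun _ => 0) 2)).
  { apply (locally_interval _ r 0 p_infty); [simpl; lra|exact I|].
    intros y Hy _. simpl in Hy. unfold wu_profile, extension_cont, h.
    rewrite Rabs_right by lra. reflexivity. }
  unfold wu_profile. rewrite Rabs_right by lra.
  destruct (Rle_dec r 2) as [Hr2|Hr2]; [destruct (Rle_lt_or_eq_dec _ _ Hr2) as [Hlt| ->]|].
  - apply (is_derive_ext_loc h).
    + apply (locally_interval _ r m_infty 2); [exact I|simpl; lra|].
      intros y _ Hy. simpl in Hy. unfold extension_cont.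
      destruct (Rle_dec y 2); [reflexivity|lra].
    + replace (- r * (c * INR (S m) / 2 * kernel_int l m r))
        with (c * (- (r / 2) * INR (S m) * kernel_int l m r)) by field.
      apply Hh.
  - rewrite kernel_int_2, !Rmult_0_r.
    apply extension_cont_is_derive.
    + specialize (Hh 2). rewrite kernel_int_2, !Rmult_0_r in Hh. exact Hh.
    + apply (is_derive_const (K := R_AbsRing) (V := R_NormedModule)).
    + unfold h. rewrite kernel_int_2. apply Rmult_0_r.
  - rewrite Rmult_0_r. apply (is_derive_ext_loc (fun _ => 0)).
    + apply (locally_interval _ r 2 p_infty); [simpl; lra|exact I|].
      intros y Hy _. simpl in Hy. unfold extension_cont.
      destruct (Rle_dec y 2); [lra|reflexivity].
    + apply (is_derive_const (K := R_AbsRing) (V := R_NormedModule)).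
Qed.

Lemma is_derive_wu_profile l m c r : r <> 0 ->
  is_derive (wu_profile l (S m) c) r (- r * wu_profile l m (c * INR (S m) / 2) r).
Proof.
  intros Hr. destruct (Rlt_or_le 0 r) as [Hp|Hn]; [now apply is_derive_wu_profile_pos|].
  apply (is_derive_ext (fun x => wu_profile l (S m) c (- x))); [intros; apply wu_profile_Ropp|].
  replace (- r * wu_profile l m (c * INR (S m) / 2) r)
    with (scal (-1) (- (- r) * wu_profile l m (c * INR (S m) / 2) (- r)))
    by (rewrite wu_profile_Ropp; change (scal ?a ?b) with (a * b); simpl; ring).
  apply (is_derive_comp (wu_profile l (S m) c) Ropp r).
  - apply is_derive_wu_profile_pos. lra.
  - apply (is_derive_opp (K := R_AbsRing) (V := R_NormedModule) (fun x => x)).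
    apply (is_derive_id (K := R_AbsRing)).
Qed.

Lemma Dop_wu_profile l m c :
  Dop (wu_profile l (S m) c) = wu_profile l m (c * INR (S m) / 2).
Proof.
  apply functional_extensionality. intros r. unfold Dop.
  destruct (Req_EM_T r 0) as [->|Hr].
  - change (wu_profile l m (c * INR (S m) / 2) 0)
      with (real (Finite (wu_profile l m (c * INR (S m) / 2) 0))).
    f_equal. apply is_lim_unique.
    apply (is_lim_ext_loc (wu_profile l m (c * INR (S m) / 2))).
    + exists (mkposreal 1 Rlt_0_1). intros y _ Hy.
      rewrite (is_derive_unique _ _ _ (is_derive_wu_profile l m c y Hy)). field. exact Hy.
    + apply is_lim_continuity, continuity_pt_filterlim, continuous_wu_profile_0.
  - rewrite (is_derive_unique _ _ _ (is_derive_wu_profile l m c r Hr)). field. exact Hr.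
Qed.

Lemma iter_Dop_wu_profile l k m c :
  Nat.iter k Dop (wu_profile l (k + m) c)
  = wu_profile l m (c * INR (Factorial.fact (k + m)) / INR (Factorial.fact m) / 2 ^ k).
Proof.
  revert m c. induction k as [|k IH]; intros m c.
  - simpl. f_equal. field. apply INR_fact_neq_0.
  - change (Nat.iter (S k) Dop ?f) with (Dop (Nat.iter k Dop f)).
    replace (S k + m)%nat with (k + S m)%nat by lia.
    rewrite IH, Dop_wu_profile. f_equal.
    rewrite (fact_simpl m), mult_INR. simpl pow.
    pose proof (INR_fact_neq_0 m). pose proof (pow_nonzero 2 k ltac:(lra)).
    field. repeat split; auto. apply not_0_INR. lia.
Qed.

Lemma kernel_int_0 l a :
  kernel_int l 0 a
  = poch 1 l / poch (3 / 2) l - a / 2 * hyp2F1 (- INR l) (1 / 2) (3 / 2) (a ^ 2 / 4).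
Proof.
  set (g := fun x => (1 - x ^ 2) ^ l).
  assert (Hg : forall b c, ex_RInt g b c).
  { intros b c. apply ex_RInt_of_ex_derive. intros x. unfold g. auto_derive. auto. }
  unfold kernel_int. rewrite (RInt_ext _ g) by (intros; unfold g; simpl; ring).
  pose proof (RInt_Chasles (V := R_CompleteNormedModule) g 0 (a / 2) 1 (Hg _ _) (Hg _ _)) as H.
  change (plus ?x ?y) with (x + y) in H.
  replace (RInt g (a / 2) 1) with (RInt g 0 1 - RInt g 0 (a / 2)) by lra.
  unfold g. rewrite RInt_one_minus_sq_pow_01, RInt_one_minus_sq_pow.
  replace ((a / 2) ^ 2) with (a ^ 2 / 4) by field. reflexivity.
Qed.

Lemma wu_diag l : (1 <= l)%nat ->
  wu l l = wu_profile l 0 (2 ^ (l + 1) * INR (Factorial.fact l)).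
Proof.
  intros hl. unfold wu. rewrite conv_ff_profile by exact hl.
  pose proof (iter_Dop_wu_profile l l 0 (2 * 4 ^ l)) as H.
  rewrite Nat.add_0_r in H. rewrite H. f_equal.
  replace 4 with (2 * 2) by ring. rewrite Rpow_mult_distr, pow_add.
  simpl (Factorial.fact 0). change (INR 1) with 1. field. apply pow_nonzero. lra.
Qed.

Theorem theorem4p3 (l : nat) (hl : (1 <= l)%nat) (r : R) (hr : 0 <= r <= 2) :
  wu l l r =
  2 ^ (l + 1) * INR (Factorial.fact l) *
  (poch 1 l / poch (3 / 2) l - r / 2 * hyp2F1 (- INR l) (1 / 2) (3 / 2) (r ^ 2 / 4)).
Proof.
  rewrite wu_diag by exact hl. unfold wu_profile. rewrite Rabs_right by lra.
  destruct (Rle_dec r 2) as [_|Hr]; [|lra].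
  now rewrite kernel_int_0.
Qed.
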